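(* Let $\psi\in\mathbb{R}[x]$. If the constant function $1$ is in the image of the Fischer operator $F_\psi$, then every zero $x\in\mathbb{R}^d$ of $\psi$ has multiplicity $\le 2$.
   Context: $\mathbb{R}[x]$ denotes the real polynomials in $d$ variables, $\Delta$ the Laplacian, and $F_\psi:\mathbb{R}[x]\to\mathbb{R}[x]$, $F_\psi(q)=\Delta(\psi q)$. The multiplicity of a zero $x_0$ of a polynomial $\psi$ is the largest natural number $N$ such that $\frac{\partial^\alpha}{\partial x^\alpha}\psi(x_0)=0$ for all multi-indices $\alpha\in\mathbb{N}_0^d$ with $|\alpha|\le N-1$. *)

From Stdlib Require Import Rdefinitions.
From HB Require Import structures.
From mathcomp Require Import all_boot all_algebra.
From mathcomp Require Import mpoly.
From mathcomp Require Import Rstruct.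

Set Implicit Arguments.
Unset Strict Implicit.
Unset Printing Implicit Defensive.

Import GRing.Theory.
Local Open Scope ring_scope.

Definition laplacian (d : nat) (p : {mpoly R[d]}) : {mpoly R[d]} :=
  \sum_(i < d) (p^`M(i))^`M(i).

Definition fischer (d : nat) (psi q : {mpoly R[d]}) : {mpoly R[d]} :=
  laplacian (psi * q).

(* "x0 has multiplicity at least N for psi": all partial derivatives
   d^alpha psi with |alpha| <= N-1 vanish at x0.  The multiplicity is the
   largest such N. *)
Definition vanishes_to_order (d : nat) (psi : {mpoly R[d]}) (x0 : 'I_d -> R)
    (N : nat) : Prop :=
  forall alpha : 'X_{1..d}, (mdeg alpha <= N.-1)%N -> (psi^`M[alpha]).@[x0] = 0.

Definition multiplicity_le (d : nat) (psi : {mpoly R[d]}) (x0 : 'I_d -> R)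
    (k : nat) : Prop :=
  forall N : nat, vanishes_to_order psi x0 N -> (N <= k)%N.

From Stdlib Require Import Rdefinitions.
From HB Require Import structures.
From mathcomp Require Import all_boot all_algebra.
From mathcomp Require Import mpoly.
From mathcomp Require Import Rstruct.
From mathcomp Require Import ring.

Set Implicit Arguments.
Unset Strict Implicit.
Unset Printing Implicit Defensive.

Local Open Scope ring_scope.
Import GRing.Theory.

(* If psi vanishes to order 3 at x0, every term of the second-order Leibniz
   expansion of Delta(psi q) carries a factor psi, d_i psi or d_i^2 psi, so
   Delta(psi q)(x0) = 0, which is impossible when Delta(psi q) = 1. *)

Lemma mderiv2_mul (n : nat) (A : comNzRingType) (i : 'I_n) (p q : {mpoly A[n]}) :
  (p * q)^`M(i)^`M(i) =
    p^`M(i)^`M(i) * q + (p^`M(i) * q^`M(i)) *+ 2 + p * q^`M(i)^`M(i).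
Proof. rewrite !mderivM !mderivD !mderivM; ring. Qed.

Section VanishingToOrder.

Variables (d : nat) (psi : {mpoly R[d]}) (x0 : 'I_d -> R) (N : nat).
Hypothesis psi_vanishes : vanishes_to_order psi x0 N.

Lemma vanishes_to_order_mderiv (i : 'I_d) :
  (1 < N)%N -> (psi^`M(i)).@[x0] = 0.
Proof.
move=> N_gt1; rewrite -mderivmU1m; apply: psi_vanishes.
by rewrite mdeg1 -ltnS prednK // ltnW.
Qed.

Lemma vanishes_to_order_mderiv2 (i : 'I_d) :
  (2 < N)%N -> (psi^`M(i)^`M(i)).@[x0] = 0.
Proof.
move=> N_gt2; rewrite -!mderivmU1m -mderivmDm; apply: psi_vanishes.
by rewrite mdegD mdeg1 -ltnS prednK // ltnW // ltnW.
Qed.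

End VanishingToOrder.

Lemma meval_laplacian_mul_eq0 (d : nat) (psi q : {mpoly R[d]}) (x0 : 'I_d -> R) :
  psi.@[x0] = 0 ->
  (forall i, (psi^`M(i)).@[x0] = 0) ->
  (forall i, (psi^`M(i)^`M(i)).@[x0] = 0) ->
  (laplacian (psi * q)).@[x0] = 0.
Proof.
move=> psi0 dpsi0 d2psi0.
rewrite /laplacian (big_morph (meval x0) (mevalD x0) (meval0 x0)).
apply: big1 => i _.
by rewrite mderiv2_mul !mevalD !mevalM psi0 dpsi0 d2psi0 !mul0r !addr0.
Qed.

Theorem mainTheorem3 (d : nat) (psi : {mpoly R[d]}) :
  (exists q : {mpoly R[d]}, fischer psi q = 1) ->
  forall x0 : 'I_d -> R, psi.@[x0] = 0 -> multiplicity_le psi x0 2.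
Proof.
move=> [q Fq1] x0 psi0 N psi_vanishes; rewrite leqNgt; apply/negP => N_gt2.
have N_gt1 : (1 < N)%N by apply: ltnW.
have F0 : (fischer psi q).@[x0] = 0.
  apply: meval_laplacian_mul_eq0 psi0 _ _ => i.
  - exact: vanishes_to_order_mderiv psi_vanishes i N_gt1.
  - exact: vanishes_to_order_mderiv2 psi_vanishes i N_gt2.
by move: F0; rewrite Fq1 meval1; apply/eqP/oner_neq0.
Qed.
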